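(* Let $R$ be a right semiartinian ring that is not completely reducible, and let $M$ be a finitely generated weakly $R$-projective right $R$-module. Then $M$ is projective.
   Context: All modules are right $R$-modules. For a right semiartinian ring $R$, the right socle sequence $(S_\alpha \mid \alpha \leq \sigma+1)$ is defined by $S_0 = 0$, $S_{\alpha+1}/S_\alpha = \mathrm{Soc}(R/S_\alpha)$, $S_\alpha = \bigcup_{\beta<\alpha} S_\beta$ for limit $\alpha$, with $\sigma+1$ the least ordinal such that $S_{\sigma+1} = R$ (the Loewy length); it is assumed that $\sigma > 0$ (i.e. $R$ is not completely reducible). For $\alpha \leq \sigma$, the $\alpha$th layer is $L_\alpha = S_{\alpha+1}/S_\alpha$ and the $\alpha$th layer epimorphism is the canonical projection $\pi_\alpha : S_{\alpha+1} \to L_\alpha$. A module $M$ is weakly $R$-projective if for each $0 < \alpha \leq \sigma$, each $f \in \mathrm{Hom}_R(M, L_\alpha)$ with finitely generated image factors through $\pi_\alpha$, i.e. $f = \pi_\alpha g$ for some $g \in \mathrm{Hom}_R(M, S_{\alpha+1})$. *)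

(* Right R-modules are modelled as left modules over the
   converse ring R^c (so  m *: x  with m : R^c is the right action x . m). *)
From HB Require Import structures.
From mathcomp Require Import all_boot all_algebra.
Set Implicit Arguments. Unset Strict Implicit. Unset Printing Implicit Defensive.
Import GRing.Theory.
Local Open Scope ring_scope.

Section SocleSequence.
Variable R : pzRingType.

Definition subR (A B : R -> Prop) : Prop := forall x, A x -> B x.

Definition right_ideal (I : R -> Prop) : Prop :=
  [/\ I 0, (forall x y, I x -> I y -> I (x - y)) & (forall x r, I x -> I (x * r))].

Definition zero_ideal : R -> Prop := fun x => x = 0.

(* T/S is a simple submodule of R/S : T is a right ideal strictly above S
   with no right ideal strictly between S and T. *)
Definition simple_over (S T : R -> Prop) : Prop :=
  [/\ right_ideal T, subR S T, (exists x, T x /\ ~ S x) &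
      forall U, right_ideal U -> subR S U -> subR U T -> subR U S \/ subR T U].

(* The right ideal S' with S'/S = Soc(R/S): the preimage of the sum of all
   simple submodules of R/S, i.e. the least right ideal containing S and
   every T with T/S simple. *)
Definition socle_succ (S : R -> Prop) : R -> Prop :=
  fun x => forall U, right_ideal U -> subR S U ->
    (forall T, simple_over S T -> subR T U) -> U x.

(* The members of the right socle sequence (S_alpha): the least family
   containing S_0 = 0, closed under S |-> socle_succ S and under unions of
   nonempty subfamilies (which gives S_alpha = U_{beta<alpha} S_beta at limits). *)
Inductive socle_stage : (R -> Prop) -> Prop :=
| stage0 : socle_stage zero_ideal
| stageS S : socle_stage S -> socle_stage (socle_succ S)
| stageU (F : (R -> Prop) -> Prop) :
    (exists S, F S) -> (forall S, F S -> socle_stage S) ->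
    socle_stage (fun x => exists2 S, F S & S x).

Definition right_semiartinian : Prop :=
  exists2 S, socle_stage S & forall x, S x.

Definition completely_reducible : Prop := forall x, socle_succ zero_ideal x.

Definition fin_gen (M : lmodType R^c) : Prop :=
  exists n (v : 'I_n -> M), forall m : M,
    exists c : 'I_n -> R^c, m = \sum_(i < n) c i *: v i.

Definition fg_image (M L : lmodType R^c) (f : {linear M -> L}) : Prop :=
  exists n (v : 'I_n -> M), forall m : M,
    exists c : 'I_n -> R^c, f m = \sum_(i < n) c i *: f (v i).

Definition projective (M : lmodType R^c) : Prop :=
  forall (N N' : lmodType R^c) (h : {linear N -> N'}),
    (forall y, exists x, h x = y) ->
    forall f : {linear M -> N'}, exists g : {linear M -> N}, forall m, h (g m) = f m.

(* For 0 < alpha <= sigma (i.e. S = S_alpha is a stage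
   different from 0 and from R), S_{alpha+1} = socle_succ S is represented by
   any module P with an injective homomorphism iota : P -> R_R with image
   S_{alpha+1}, and L_alpha with pi_alpha by any epimorphism pi : P -> L whose
   kernel is S_alpha (all such presentations are canonically isomorphic). *)
Definition weakly_projective (M : lmodType R^c) : Prop :=
  forall S, socle_stage S -> (exists x, S x /\ x != 0) -> (exists x, ~ S x) ->
  forall (P : lmodType R^c) (iota : {linear P -> (R^c)^o}),
    injective iota -> (forall y, socle_succ S y <-> exists p, iota p = y) ->
  forall (L : lmodType R^c) (pi : {linear P -> L}),
    (forall l, exists p, pi p = l) -> (forall p, pi p = 0 <-> S (iota p)) ->
  forall f : {linear M -> L}, fg_image f ->
    exists g : {linear M -> P}, forall m, pi (g m) = f m.

End SocleSequence.

(* Let v_1, ..., v_n generate M and comb v : R^n -> M be the induced epimorphism.  By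
   induction along the socle sequence we show that every endomorphism f of M whose values
   lift to S^n has a linear lift M -> S^n; at S = R this splits comb v, so M is a direct
   summand of R^n.
   Successor step S -> S': the values f(v_k) lift into S^n plus finitely many simple
   summands of the semisimple module S'^n/S^n.  A complement, inside that finite sum, of
   the kernel of S'^n/S^n -> M/comb(S^n) yields a lift psi of f into S'^n that is linear
   modulo S^n.  The coordinates of psi are thus homomorphisms M -> S'/S = L_alpha with
   finitely generated image, and weak R-projectivity lifts them to S' (for S = 0, psi is
   already linear).  The remaining error f - comb(lift) lifts to S^n by induction.
   Limit step: the stages are totally ordered, so the finitely many coordinates of lifts
   of the f(v_k) already lie in one earlier stage. *)

From HB Require Import structures.
From mathcomp Require Import all_boot all_algebra.
From mathcomp Require Import boolp classical_sets.
From Stdlib Require List.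
Set Implicit Arguments. Unset Strict Implicit. Unset Printing Implicit Defensive.
Import GRing.Theory.
Local Open Scope ring_scope.
Local Open Scope classical_set_scope.

Lemma Forall_cat (T : Type) (P : T -> Prop) (s1 s2 : seq T) :
  List.Forall P s1 -> List.Forall P s2 -> List.Forall P (s1 ++ s2).
Proof. by move=> P1 P2; apply: (proj2 (List.Forall_app P s1 s2)). Qed.

(** * Submodules and their finite sums *)

Section Submodule.
Variables (K : pzRingType) (V : lmodType K).
Implicit Types (W U Z B : set V) (Ws : seq (set V)).

Definition submodule W : Prop :=
  [/\ W 0, forall x y, W x -> W y -> W (x - y) & forall a x, W x -> W (a *: x)].

Section Closure.
Variables (W : set V) (sW : submodule W).

Lemma submod0 : W 0. Proof. by case: sW. Qed.
Lemma submodB x y : W x -> W y -> W (x - y). Proof. by case: sW => _ + _; apply. Qed.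
Lemma submodZ a x : W x -> W (a *: x). Proof. by case: sW => _ _; apply. Qed.

Lemma submodN x : W x -> W (- x).
Proof. by move=> Wx; rewrite -sub0r; apply: submodB => //; apply: submod0. Qed.

Lemma submodD x y : W x -> W y -> W (x + y).
Proof. by move=> Wx Wy; rewrite -[y]opprK; apply: submodB => //; apply: submodN. Qed.

Lemma submod_sum (I : Type) (r : seq I) (P : pred I) (F : I -> V) :
  (forall i, P i -> W (F i)) -> W (\sum_(i <- r | P i) F i).
Proof. by move=> WF; apply: big_ind => //; [apply: submod0 | apply: submodD]. Qed.

End Closure.

Lemma submoduleI W U : submodule W -> submodule U -> submodule (W `&` U).
Proof.
move=> sW sU; split=> [|x y [Wx Ux] [Wy Uy]|a x [Wx Ux]]; split;
  by [apply: submod0 | apply: submodB | apply: submodZ].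
Qed.

Lemma submodule_chain_union (Fam : set V -> Prop) :
  (forall A B, Fam A -> Fam B -> A `<=` B \/ B `<=` A) -> (exists A, Fam A) ->
  (forall A, Fam A -> submodule A) -> submodule (fun x => exists2 A, Fam A & A x).
Proof.
move=> chain [A0 FA0] sFam; split.
- by exists A0 => //; apply: submod0; apply: sFam.
- move=> x y [A FA Ax] [A' FA' A'y].
  have [AA'|A'A] := chain A A' FA FA'.
    by exists A'; last exact: (submodB (sFam _ FA') (AA' _ Ax) A'y).
  by exists A; last exact: (submodB (sFam _ FA) Ax (A'A _ A'y)).
- by move=> a x [A FA Ax]; exists A; last exact: (submodZ (sFam _ FA) a Ax).
Qed.

Definition addp W1 W2 : set V := fun y => exists2 x, W1 x & W2 (y - x).

Lemma submodule_addp W1 W2 : submodule W1 -> submodule W2 -> submodule (addp W1 W2).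
Proof.
move=> sW1 sW2; split.
- by exists 0; [apply: submod0 | rewrite subr0; apply: submod0].
- move=> x y [x1 W1x1 W2x] [y1 W1y1 W2y]; exists (x1 - y1); first exact: submodB.
  by rewrite opprD addrACA -opprD; apply: submodB.
- move=> a x [x1 W1x1 W2x]; exists (a *: x1); first exact: submodZ.
  by rewrite -scalerBr; apply: submodZ.
Qed.

Lemma addpl W1 W2 : W2 0 -> W1 `<=` addp W1 W2.
Proof. by move=> W20 x W1x; exists x; rewrite ?subrr. Qed.

Lemma addpr W1 W2 : W1 0 -> W2 `<=` addp W1 W2.
Proof. by move=> W10 x W2x; exists 0; rewrite ?subr0. Qed.

Lemma addpS W1 W2 W3 W4 : W1 `<=` W3 -> W2 `<=` W4 -> addp W1 W2 `<=` addp W3 W4.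
Proof. by move=> W13 W24 y [x /W13 W3x /W24 W4y]; exists x. Qed.

Lemma addp_sub W1 W2 U : submodule U -> W1 `<=` U -> W2 `<=` U -> addp W1 W2 `<=` U.
Proof.
by move=> sU W1U W2U y [x /W1U Ux /W2U Uyx]; rewrite -(subrK x y); apply: submodD.
Qed.

Definition sump Ws : set V := foldr addp [set 0] Ws.

Lemma submodule_sump Ws : List.Forall submodule Ws -> submodule (sump Ws).
Proof.
elim=> [|W Ws' sW _ IH]; last exact: submodule_addp.
by split=> [|x y -> ->|a x ->]; rewrite ?subr0 ?scaler0.
Qed.

Lemma sump_sub Ws U : submodule U -> List.Forall (fun W => W `<=` U) Ws -> sump Ws `<=` U.
Proof.
move=> sU; elim=> [_ ->|W Ws' WU _ IH]; first exact: submod0.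
exact: addp_sub.
Qed.

Lemma sump_catl Ws1 Ws2 : List.Forall submodule Ws2 -> sump Ws1 `<=` sump (Ws1 ++ Ws2).
Proof.
move=> sWs2; elim: Ws1 => [_ ->|W Ws1 IH]; first exact: (submod0 (submodule_sump sWs2)).
exact: addpS.
Qed.

Lemma sump_catr Ws1 Ws2 : List.Forall submodule Ws1 -> sump Ws2 `<=` sump (Ws1 ++ Ws2).
Proof.
elim=> [//|W Ws1' sW _ IH]; apply: subset_trans IH _.
exact: addpr (submod0 sW).
Qed.

Section Complement.
Variables (Z B : set V).
Hypotheses (sZ : submodule Z) (sB : submodule B) (ZB : Z `<=` B).

(* Either W lies in B, or W meets B inside Z and W / (W `&` B) is simple. *)
Definition simple_mod W := submodule W /\
  forall U, submodule U -> W `&` B `<=` U -> U `<=` W -> U `<=` Z \/ W `<=` U.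

Definition independent Ws := sump Ws `&` B `<=` Z.

Lemma independent_cons W Ws w : simple_mod W -> List.Forall submodule Ws ->
  independent Ws -> W w -> ~ addp B (sump Ws) w -> independent (W :: Ws).
Proof.
move=> [sW Wsimple] sWs indWs Ww nXw.
have sX : submodule (addp B (sump Ws)) by apply: submodule_addp => //; apply: submodule_sump.
have [UZ|WU] : W `&` addp B (sump Ws) `<=` Z \/ W `<=` W `&` addp B (sump Ws).
- apply: Wsimple => [|x [Wx Bx]|x []//]; first exact: submoduleI.
  by split=> //; apply: addpl => //; apply: (submod0 (submodule_sump sWs)).
- move=> c [[w' Ww' Wsc] Bc].
  have Zw' : Z w'.
    apply: UZ; split=> //; exists c => //.
    by rewrite -opprB; apply: submodN => //; apply: submodule_sump.
  rewrite -(subrK w' c); apply: submodD => //; apply: indWs; split=> //.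
  by apply: submodB => //; apply: ZB.
- by case: nXw; case: (WU w Ww).
Qed.

Lemma semisimple_complement Ws : List.Forall simple_mod Ws ->
  exists Ws1, [/\ List.Forall simple_mod Ws1, independent Ws1,
    sump Ws1 `<=` sump Ws & sump Ws `<=` addp B (sump Ws1)].
Proof.
have simple_sub W : simple_mod W -> submodule W by case.
elim=> [|W Ws' sW sWs' [Ws1 [sWs1 indWs1 Ws1Ws' Ws'Ws1]]].
  exists [::]; split=> // [x [-> _]|]; first exact: submod0.
  by apply: addpr; apply: submod0.
have sWs1' : List.Forall submodule Ws1 := List.Forall_impl _ simple_sub sWs1.
have sX : submodule (addp B (sump Ws1)).
  by apply: submodule_addp => //; apply: submodule_sump.
have W0 := submod0 (simple_sub _ sW).
have Ws'0 := submod0 (submodule_sump (List.Forall_impl _ simple_sub sWs')).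
have [WX|] := pselect (W `<=` addp B (sump Ws1)).
  exists Ws1; split=> //; first by apply: subset_trans Ws1Ws' _; apply: addpr.
  exact: addp_sub.
move=> /existsPNP[w Ww nXw]; exists (W :: Ws1); split.
- by constructor.
- exact: independent_cons nXw.
- exact: addpS.
- apply: addp_sub.
  + apply: submodule_addp => //.
    by apply: submodule_addp; [apply: simple_sub | apply: submodule_sump].
  + move=> x Wx; apply: addpr (submod0 sB) _ _.
    exact: addpl (submod0 (submodule_sump sWs1')) _ Wx.
  + by apply: subset_trans Ws'Ws1 _; apply: addpS => // x; apply: addpr.
Qed.

End Complement.
End Submodule.
Arguments submodule {K V} W.

Section LinearImage.
Variables (K : pzRingType) (U V : lmodType K) (f : {linear U -> V}).

Lemma submodule_image (W : set U) : submodule W -> submodule (f @` W).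
Proof.
move=> sW; split=> [|_ _ [x Wx <-] [y Wy <-]|a _ [x Wx <-]].
- by exists 0; [apply: submod0 | rewrite linear0].
- by exists (x - y); [apply: submodB | rewrite linearB].
- by exists (a *: x); [apply: submodZ | rewrite linearZ].
Qed.

Lemma submodule_preimage (W : set V) : submodule W -> submodule (f @^-1` W).
Proof.
move=> sW; split=> [|x y|a x]; rewrite /preimage /= ?linear0 ?linearB ?linearZ.
- exact: submod0.
- exact: submodB.
- exact: submodZ.
Qed.

End LinearImage.

(** * Submodule and quotient modules *)

Section SubmoduleAndQuotient.
Variables (K : pzRingType) (V : lmodType K) (W : set V).
Hypothesis sW : submodule W.

Definition submod_pred : {pred V} := fun x => `[< W x >].

Lemma submod_pred_closed : submod_closed submod_pred.
Proof.
split=> [|a x y /asboolP Wx /asboolP Wy]; apply/asboolP; first exact: submod0.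
by apply: submodD => //; apply: submodZ.
Qed.
HB.instance Definition _ := GRing.isSubmodClosed.Build K V submod_pred submod_pred_closed.
HB.instance Definition _ := [SubChoice_isSubLmodule of {x : V | x \in submod_pred} by <:].

Lemma exists_submodule_embedding : exists (P : lmodType K) (iota : {linear P -> V}),
  injective iota /\ forall y, W y <-> exists p, iota p = y.
Proof.
exists {x : V | x \in submod_pred}, val; split; first exact: val_inj.
move=> y; split=> [Wy|[p <-]]; last exact/asboolP/(valP p).
by exists (exist _ y (asboolT Wy)).
Qed.

Local Notation Q := (@Quotient.quot V submod_pred).
Local Open Scope quotient_scope.

Definition quot_scale (a : K) := lift_op1 Q ( *:%R a).

Lemma pi_scale a : {morph \pi_Q : x / a *: x >-> quot_scale a x}.
Proof.
move=> x; unlock quot_scale; apply/eqP; rewrite piE Quotient.equivE -scalerBr /=.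
by rewrite rpredZ // Quotient.idealrBE reprK.
Qed.
Canonical pi_scale_morph a := PiMorph1 (pi_scale a).

Lemma quot_scaleA a b x : quot_scale a (quot_scale b x) = quot_scale (a * b) x.
Proof. by rewrite -[x]reprK !piE scalerA. Qed.

Lemma quot_scale1 : left_id 1 quot_scale.
Proof. by move=> x; rewrite -[x]reprK !piE scale1r. Qed.

Lemma quot_scaleDr : right_distributive quot_scale +%R.
Proof. by move=> a x y; rewrite -[x]reprK -[y]reprK !piE scalerDr. Qed.

Lemma quot_scaleDl x : {morph quot_scale^~ x : a b / a + b}.
Proof. by move=> a b; rewrite -[x]reprK !piE scalerDl. Qed.

HB.instance Definition _ :=
  GRing.Zmodule_isLmodule.Build K Q quot_scaleA quot_scale1 quot_scaleDr quot_scaleDl.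

Lemma pi_quot_is_linear : linear (\pi_Q : V -> Q).
Proof. by move=> a x y; rewrite !piE. Qed.
HB.instance Definition _ := GRing.isLinear.Build K V Q *:%R (\pi_Q) pi_quot_is_linear.

Lemma exists_quotient_module : exists (L : lmodType K) (pi : {linear V -> L}),
  (forall l, exists x, pi x = l) /\ forall x, pi x = 0 <-> W x.
Proof.
exists Q, \pi_Q; split=> [l|x]; first by exists (repr l); apply: reprK.
have pi0 : \pi_Q 0 = 0 by rewrite piE.
rewrite -pi0; split=> [/eqP|Wx]; first by rewrite -Quotient.idealrBE subr0 => /asboolP.
by apply/eqP; rewrite -Quotient.idealrBE subr0; apply/asboolP.
Qed.

End SubmoduleAndQuotient.

(** * The socle sequence *)

Lemma chain_finite_bound (T : Type) (I : finType) (Fam : set T -> Prop) (y : I -> T) :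
  (forall A B, Fam A -> Fam B -> A `<=` B \/ B `<=` A) -> (exists A, Fam A) ->
  (forall i, exists2 A, Fam A & A (y i)) -> exists2 C, Fam C & forall i, C (y i).
Proof.
move=> chain [A0 FA0] Fy.
suff [C FC Cy] : exists2 C, Fam C & forall i, i \in enum I -> C (y i).
  by exists C => // i; apply: Cy; rewrite mem_enum.
elim: (enum I) => [|j s [C FC Cy]]; first by exists A0.
have [C' FC' C'j] := Fy j.
have [CC'|C'C] := chain C C' FC FC'.
- by exists C' => // i; rewrite in_cons => /predU1P[-> //|/Cy/CC'].
- by exists C => // i; rewrite in_cons => /predU1P[->|/Cy //]; apply: C'C.
Qed.

Section SocleStages.
Variable R : pzRingType.
Implicit Types A B S T : R -> Prop.

Lemma right_idealP (I : R -> Prop) : right_ideal I <-> @submodule R^c (R^c)^o I.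
Proof.
by split=> -[I0 IB IM]; split=> // ? ?; apply: IM.
Qed.

Lemma subR_eq A B : subR A B -> subR B A -> A = B.
Proof. by move=> AB BA; apply/funext => x; apply/propext; split; [apply: AB | apply: BA]. Qed.

Lemma socle_succ_sup S : subR S (socle_succ S).
Proof. by move=> x Sx U _ SU _; apply: SU. Qed.

Lemma socle_succ_ideal S : right_ideal (socle_succ S).
Proof.
split=> [U [] //|x y Sx Sy U UI SU TU|x r Sx U UI SU TU]; case: (UI) => _ UB UM.
- by apply: UB; [apply: Sx | apply: Sy].
- by apply: UM; apply: Sx.
Qed.

Lemma simple_over_sub S T : simple_over S T -> subR T (socle_succ S).
Proof. by move=> sT x Tx U _ _ TU; apply: TU sT _ Tx. Qed.

Lemma socle_stage0 S : socle_stage S -> S 0.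
Proof.
elim=> [//|S' _|Fam [S0 FS0] _ IH]; first exact: socle_succ_sup.
by exists S0 => //; apply: IH.
Qed.

Definition extreme A := forall B, socle_stage B -> subR B A -> ~ subR A B ->
  subR (socle_succ B) A.

Lemma extreme_cmp A : socle_stage A -> extreme A ->
  forall B, socle_stage B -> subR B A \/ subR (socle_succ A) B.
Proof.
move=> sA eA B; elim=> [|B0 sB0 IH|Fam _ _ IH].
- by left=> x ->; apply: socle_stage0.
- case: IH => [B0A|AB0]; last by right=> x /AB0; apply: socle_succ_sup.
  have [AB0|nAB0] := pselect (subR A B0); last by left; apply: eA.
  by right; rewrite (subR_eq B0A AB0) => x.
- have [[C FC AC]|nAC] := pselect (exists2 C, Fam C & subR (socle_succ A) C).
    by right=> x /AC Cx; exists C.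
  left=> x [C FC Cx]; case: (IH C FC) => [CA|AC]; first exact: CA.
  by case: nAC; exists C.
Qed.

Lemma socle_stage_extreme A : socle_stage A -> extreme A.
Proof.
elim=> [|A0 sA0 IH|Fam _ sF IH] B sB BA nAB.
- by case: nAB => x ->; apply: socle_stage0.
- case: (extreme_cmp sA0 IH sB) => [BA0|A0B]; last by case: nAB.
  have [A0B|nA0B] := pselect (subR A0 B); first by rewrite (subR_eq BA0 A0B) => x.
  by move=> x /(IH B sB BA0 nA0B); apply: socle_succ_sup.
- have /existsPNP[x [C' FC' C'x] nBx] := nAB.
  have [[C FC BC]|nBC] := pselect (exists2 C, Fam C & subR B C); last first.
    case: (extreme_cmp (sF C' FC') (IH C' FC') sB) => [BC'|C'B].
      by case: nBC; exists C'.
    by case: nBx; apply: C'B; apply: socle_succ_sup.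
  have [CB|nCB] := pselect (subR C B); last first.
    by move=> y /(IH C FC B sB BC nCB) Cy; exists C.
  rewrite (subR_eq BC CB).
  case: (extreme_cmp (sF C FC) (IH C FC) (sF C' FC')) => [C'C|CC'].
    by case: nBx; apply: CB; apply: C'C.
  by move=> y /CC' C'y; exists C'.
Qed.

Lemma socle_stage_total A B : socle_stage A -> socle_stage B -> subR A B \/ subR B A.
Proof.
move=> sA sB; case: (extreme_cmp sA (socle_stage_extreme sA) sB) => AB; first by right.
by left=> x /socle_succ_sup /AB.
Qed.

Lemma socle_stage_ideal S : socle_stage S -> right_ideal S.
Proof.
elim=> [|S' _ _|Fam neF sF IH].
- by split=> [|x y -> ->|x r ->]; rewrite ?subrr ?mul0r.
- exact: socle_succ_ideal.
- apply/right_idealP/submodule_chain_union => // [A B FA FB|A FA].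
    exact: socle_stage_total (sF A FA) (sF B FB).
  by apply/right_idealP; apply: IH.
Qed.

End SocleStages.

(** * Lifting along the socle sequence *)

Section Combination.
Variables (R : pzRingType) (n : nat).
Local Notation F := {ffun 'I_n -> (R^c)^o}.

Definition comb_fun (V : lmodType R^c) (w : 'I_n -> V) (x : F) : V :=
  \sum_i (x i : R^c) *: w i.

Lemma comb_fun_is_linear (V : lmodType R^c) (w : 'I_n -> V) : linear (comb_fun w).
Proof.
move=> a x y; rewrite /comb_fun scaler_sumr -big_split; apply: eq_bigr => i _.
by rewrite !ffunE scalerDl scalerA.
Qed.

Definition comb (V : lmodType R^c) (w : 'I_n -> V) : {linear F -> V} :=
  HB.pack (comb_fun w) (GRing.isLinear.Build _ _ _ _ _ (comb_fun_is_linear w)).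

Lemma combE (V : lmodType R^c) (w : 'I_n -> V) x : comb w x = \sum_i (x i : R^c) *: w i.
Proof. by []. Qed.

Lemma linear_comb (V V' : lmodType R^c) (f : {linear V -> V'}) w x :
  f (comb w x) = comb (f \o w) x.
Proof. by rewrite linear_sum; apply: eq_bigr => i _; rewrite linearZ. Qed.

Definition unitv_fun (i : 'I_n) (t : (R^c)^o) : F := [ffun j => if j == i then t else 0].

Lemma unitv_fun_is_linear i : linear (unitv_fun i).
Proof.
by move=> a s t; apply/ffunP => j; rewrite !ffunE; case: (j == i); rewrite ?scaler0 ?addr0.
Qed.

Definition unitv i : {linear (R^c)^o -> F} :=
  HB.pack (unitv_fun i) (GRing.isLinear.Build _ _ _ _ _ (unitv_fun_is_linear i)).

Lemma unitv_inj i : injective (unitv i).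
Proof. by move=> s t /ffunP /(_ i); rewrite !ffunE eqxx. Qed.

Lemma ffun_sum_unitv (x : F) : x = \sum_i unitv i (x i).
Proof.
apply/ffunP => j; rewrite sum_ffunE (bigD1 j) //= ffunE eqxx big1 ?addr0 //.
by move=> i /negbTE nij; rewrite ffunE eq_sym nij.
Qed.

Definition vec_in (S : R -> Prop) : set F := fun x => forall i, S (x i).

Lemma submodule_vec_in S : right_ideal S -> submodule (vec_in S).
Proof.
move=> /right_idealP sS; split=> [i|x y Sx Sy i|a x Sx i]; rewrite !ffunE.
- exact: submod0.
- exact: submodB.
- exact: submodZ.
Qed.

Lemma vec_inS S S' : subR S S' -> vec_in S `<=` vec_in S'.
Proof. by move=> SS' x Sx i; apply: SS'. Qed.

Lemma vec_in_unitv S i t : S 0 -> S t -> vec_in S (unitv i t).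
Proof. by move=> S0 St j; rewrite ffunE; case: (j == i). Qed.

End Combination.
Arguments unitv {R n} i.

Lemma subrD_shift (V : zmodType) (a b c d e : V) :
  a - (b + c) = (a - (d + e)) - ((b - d) + (c - e)).
Proof. by rewrite [b - d + _]addrACA -opprD opprB subrKA. Qed.

Section Lifting.
Variables (R : pzRingType) (M : lmodType R^c) (n : nat) (v : 'I_n -> M).
Hypothesis vgen : forall m : M, exists c : 'I_n -> R^c, m = \sum_(i < n) c i *: v i.
Local Notation F := {ffun 'I_n -> (R^c)^o}.
Local Notation unitv := (@unitv R n).

Lemma linear_gen_sub (V : lmodType R^c) (f : {linear M -> V}) (W : set V) :
  submodule W -> (forall k, W (f (v k))) -> forall m, W (f m).
Proof.
move=> sW Wv m; have [c ->] := vgen m; rewrite linear_sum.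
by apply: submod_sum => // k _; rewrite linearZ; apply: submodZ.
Qed.

Lemma fg_image_gen (L : lmodType R^c) (f : {linear M -> L}) : fg_image f.
Proof.
exists n, v => m; have [c ->] := vgen m; exists c.
by rewrite linear_sum; apply: eq_bigr => k _; rewrite linearZ.
Qed.

Definition liftable (S : R -> Prop) := forall f : {linear M -> M},
  (forall m, (comb v @` vec_in S) (f m)) ->
  exists g : {linear M -> F}, (forall m, vec_in S (g m)) /\ forall m, comb v (g m) = f m.

Section SocleLayer.
Variable S : R -> Prop.
Hypothesis SI : right_ideal S.
Local Notation S' := (socle_succ S).
Local Notation Z := (@vec_in R n S).
Local Notation Z' := (@vec_in R n S').

(* The kernel of the map S'^n/S^n -> M/comb(S^n) induced by [comb v], pulled back to S'^n. *)
Let layer_ker : set F := Z' `&` comb v @^-1` (comb v @` Z).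

Let sZ : submodule Z := submodule_vec_in n SI.
Let sZ' : submodule Z' := submodule_vec_in n (socle_succ_ideal S).
Let ZZ' : Z `<=` Z' := vec_inS (@socle_succ_sup R S).
Let S0 : S 0 := submod0 (proj1 (right_idealP S) SI).

Let s_ker : submodule layer_ker.
Proof. exact/submoduleI/submodule_preimage/submodule_image. Qed.

Let Z_ker : Z `<=` layer_ker.
Proof. by move=> x Zx; split; [apply: ZZ' | exists x]. Qed.

Definition socle_atom (W : set F) := exists i T, simple_over S T /\ W = unitv i @` T.

Lemma socle_atom_sub W : socle_atom W -> W `<=` Z'.
Proof.
move=> [i [T [sT ->]]] _ [t Tt <-].
by apply: vec_in_unitv; [apply: socle_succ_sup | apply: simple_over_sub sT _ Tt].
Qed.

Lemma socle_atom_simple W : socle_atom W -> simple_mod Z layer_ker W.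
Proof.
move=> [i [T [sT ->]]]; have [TI ST _ Tsimple] := sT.
split; first exact: (submodule_image (unitv i) (proj1 (right_idealP T) TI)).
move=> U sU kerU UT.
have /right_idealP UI := submodule_preimage (unitv i) sU.
have SU : subR S (unitv i @^-1` U).
  move=> s Ss; apply: kerU; split; first by exists s => //; apply: ST.
  by apply: Z_ker; apply: vec_in_unitv.
have UT' : subR (unitv i @^-1` U) T.
  by move=> t /UT [t' Tt' /unitv_inj <-].
case: (Tsimple _ UI SU UT') => [US|TU]; [left | right].
- by move=> _ /[dup] /UT [t Tt <-] Ut; apply: vec_in_unitv => //; apply: US.
- by move=> _ [t Tt <-]; apply: TU.
Qed.

Definition socle_span : set F :=
  fun x => exists2 Ws, List.Forall socle_atom Ws & addp Z (sump Ws) x.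

Lemma socle_atoms_submodule Ws : List.Forall socle_atom Ws -> List.Forall submodule Ws.
Proof. by apply: List.Forall_impl => W /socle_atom_simple []. Qed.

Lemma submodule_socle_sum Ws : List.Forall socle_atom Ws -> submodule (addp Z (sump Ws)).
Proof. by move=> /socle_atoms_submodule aWs; apply/submodule_addp/submodule_sump. Qed.

Lemma socle_span_cat Ws1 Ws2 :
  List.Forall socle_atom Ws1 -> List.Forall socle_atom Ws2 ->
  addp Z (sump Ws1) `|` addp Z (sump Ws2) `<=` addp Z (sump (Ws1 ++ Ws2)).
Proof.
move=> /socle_atoms_submodule aWs1 /socle_atoms_submodule aWs2 x [] /addpS; apply=> //.
- exact: sump_catl.
- exact: sump_catr.
Qed.

Lemma submodule_socle_span : submodule socle_span.
Proof.
split=> [|x y [Ws1 aWs1 Yx] [Ws2 aWs2 Yy]|a x [Ws aWs Yx]].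
- by exists [::]; last exact: (submod0 (submodule_socle_sum (List.Forall_nil _))).
- have aWs : List.Forall socle_atom (Ws1 ++ Ws2) by exact: Forall_cat.
  exists (Ws1 ++ Ws2); first exact: aWs.
  apply: (submodB (submodule_socle_sum aWs)).
  + by apply: (socle_span_cat aWs1 aWs2); left.
  + by apply: (socle_span_cat aWs1 aWs2); right.
- by exists Ws => //; apply: (submodZ (submodule_socle_sum aWs)).
Qed.

Lemma vec_in_socle_span x : Z' x -> socle_span x.
Proof.
move=> S'x; rewrite (ffun_sum_unitv x); apply: (submod_sum submodule_socle_span) => i _.
have /right_idealP YI := submodule_preimage (unitv i) submodule_socle_span.
apply: (S'x i (unitv i @^-1` socle_span)) => // [s Ss|T sT t Tt].
- exists [::] => //; exists (unitv i s); first exact: vec_in_unitv.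
  by rewrite subrr.
- exists [:: unitv i @` T]; first by constructor => //; exists i, T.
  exists 0; first exact: submod0.
  by rewrite subr0; exists (unitv i t); [exists t | rewrite subrr].
Qed.

Lemma socle_span_common (s : seq F) : {in s, forall x, Z' x} ->
  exists2 Ws, List.Forall socle_atom Ws & {in s, forall x, addp Z (sump Ws) x}.
Proof.
elim: s => [_|x s IH S'xs]; first by exists [::].
have [Ws1 aWs1 Yx] := vec_in_socle_span (S'xs x (mem_head x s)).
have [Ws2 aWs2 Ys] := IH (fun y ys => S'xs y (@mem_behead _ (x :: s) y ys)).
exists (Ws1 ++ Ws2); first exact: Forall_cat.
move=> y; rewrite in_cons => /predU1P[->|/Ys Yy].
- by apply: (socle_span_cat aWs1 aWs2); left.
- by apply: (socle_span_cat aWs1 aWs2); right.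
Qed.

Lemma socle_layer_lift (f : {linear M -> M}) : (forall m, (comb v @` Z') (f m)) ->
  exists psi : M -> F, [/\ forall m, Z' (psi m),
    forall m, (comb v @` Z) (comb v (psi m) - f m) &
    forall a m1 m2, Z (psi (a *: m1 + m2) - (a *: psi m1 + psi m2))].
Proof.
move=> fS'.
have /choice[x xP] : forall k, exists x, Z' x /\ comb v x = f (v k).
  by move=> k; have [x S'x xE] := fS' (v k); exists x.
have [Ws aWs spanWs] : exists2 Ws, List.Forall socle_atom Ws &
    {in codom x, forall y, addp Z (sump Ws) y}.
  by apply: socle_span_common => _ /codomP[k ->]; apply: (xP k).1.
have [Ws1 [simpleWs1 indWs1 Ws1Ws WsWs1]] := semisimple_complement sZ s_ker Z_ker
  (List.Forall_impl _ socle_atom_simple aWs).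
have sWs1 : submodule (sump Ws1).
  by apply: submodule_sump; apply: List.Forall_impl simpleWs1 => W [].
have cover m : (comb v @` addp layer_ker (sump Ws1)) (f m).
  apply: linear_gen_sub (submodule_image _ (submodule_addp s_ker sWs1)) _ m => k.
  exists (x k); last exact: (xP k).2.
  apply: (addp_sub (submodule_addp s_ker sWs1)) (spanWs _ (codom_f x k)) => //.
  by move=> y /Z_ker; apply: addpl; apply: submod0.
have /choice[psi psiP] : forall m, exists c, sump Ws1 c /\ (comb v @` Z) (comb v c - f m).
  move=> m; have [y [b [_ Zb] Ws1c] <-] := cover m.
  exists (y - b); split=> //; rewrite linearB addrC addKr.
  exact: (submodN (submodule_image _ sZ)).
have sZ'Ws1 : sump Ws1 `<=` Z'.
  apply: subset_trans Ws1Ws _; apply: sump_sub => //.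
  exact: (List.Forall_impl _ socle_atom_sub aWs).
exists psi; split=> [m|m|a m1 m2]; first exact: sZ'Ws1 _ (psiP m).1.
  exact: (psiP m).2.
have Ws1d : sump Ws1 (psi (a *: m1 + m2) - (a *: psi m1 + psi m2)).
  apply: (submodB sWs1); first exact: (psiP _).1.
  by apply: (submodD sWs1); [apply: (submodZ sWs1) |]; apply: (psiP _).1.
apply: indWs1; split=> //; split; first exact: sZ'Ws1.
suff : (comb v @` Z) (comb v (psi (a *: m1 + m2) - (a *: psi m1 + psi m2))) by [].
rewrite linearB linearP (subrD_shift _ _ _ (a *: f m1) (f m2)) -linearP -scalerBr.
have sT := submodule_image (comb v) sZ.
apply: (submodB sT); first exact: (psiP _).2.
by apply: (submodD sT); [apply: (submodZ sT) |]; apply: (psiP _).2.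
Qed.

End SocleLayer.

Lemma liftable0 : liftable (@zero_ideal R).
Proof.
move=> f f0; exists \0; split=> [m i|m]; first by rewrite ffunE.
have [x x0 <-] := f0 m; rewrite (_ : x = 0) ?linear0 //.
by apply/ffunP => i; rewrite ffunE; apply: x0.
Qed.

Lemma liftable_union (Fam : (R -> Prop) -> Prop) : (exists S, Fam S) ->
  (forall S, Fam S -> socle_stage S) -> (forall S, Fam S -> liftable S) ->
  liftable (fun x => exists2 S, Fam S & S x).
Proof.
move=> neF sF IH f fU.
have /choice[x xP] : forall k, exists x : F,
    (forall i, exists2 S, Fam S & S (x i)) /\ comb v x = f (v k).
  by move=> k; have [x Ux xE] := fU (v k); exists x.
have [C FC Cx] := chain_finite_bound (y := fun ki : 'I_n * 'I_n => x ki.1 ki.2)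
  (fun A B FA FB => socle_stage_total (sF A FA) (sF B FB)) neF (fun ki => (xP ki.1).1 ki.2).
have sC := submodule_image (comb v) (submodule_vec_in n (socle_stage_ideal (sF C FC))).
have fC : forall m, (comb v @` vec_in C) (f m).
  apply: (linear_gen_sub sC) => k.
  by exists (x k) => [i|]; [apply: (Cx (k, i)) | apply: (xP k).2].
have [g [gC gE]] := IH C FC f fC.
by exists g; split=> // m i; exists C => //; apply: gC.
Qed.

Hypothesis wproj : weakly_projective M.

Lemma weakly_projective_lift (S : R -> Prop) : socle_stage S -> forall phi : M -> (R^c)^o,
  (forall m, socle_succ S (phi m)) ->
  (forall a m1 m2, S (phi (a *: m1 + m2) - (a *: phi m1 + phi m2))) ->
  exists G : {linear M -> (R^c)^o}, forall m, socle_succ S (G m) /\ S (G m - phi m).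
Proof.
move=> sS phi phiS' phiL.
have /right_idealP sSI := socle_stage_ideal sS.
have /right_idealP sS'I := socle_succ_ideal S.
(* Weak R-projectivity only concerns the layers with S <> 0 and S <> R; the two
   remaining cases are trivial. *)
have [Sall|/existsNP nSall] := pselect (forall x, S x).
  by exists \0 => m; split; [apply: submod0 sS'I | apply: Sall].
have [Szero|/existsNP[s /not_implyP[Ss /eqP s0]]] := pselect (forall x, S x -> x = 0).
  have phi_lin : linear phi.
    by move=> a m1 m2; apply/eqP; rewrite -subr_eq0; apply/eqP/Szero/phiL.
  pose G : {linear M -> (R^c)^o} := HB.pack phi (GRing.isLinear.Build _ _ _ _ _ phi_lin).
  exists G => m.
  by split; [apply: phiS' | rewrite /= subrr; apply: submod0 sSI].
have [P [iota [iota_inj iotaE]]] := exists_submodule_embedding sS'I.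
have [L [pi [pi_surj piE]]] := exists_quotient_module (submodule_preimage iota sSI).
have /choice[pre preE] : forall m, exists p, iota p = phi m by move=> m; apply/iotaE.
have Phi_lin : linear (pi \o pre).
  move=> a m1 m2; apply/eqP; rewrite -subr_eq0 /= -linearP -linearB; apply/eqP/piE.
  by rewrite /preimage /= linearB linearP !preE.
pose Phi : {linear M -> L} := HB.pack (pi \o pre) (GRing.isLinear.Build _ _ _ _ _ Phi_lin).
have [G0 G0E] := wproj sS (ex_intro _ s (conj Ss s0)) nSall iota_inj iotaE pi_surj piE
  (fg_image_gen Phi).
exists (iota \o G0) => m; split; first by apply/iotaE; exists (G0 m).
by rewrite /= -preE -linearB; apply/piE; rewrite linearB G0E subrr.
Qed.

Lemma liftable_succ (S : R -> Prop) : socle_stage S -> liftable S -> liftable (socle_succ S).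
Proof.
move=> sS IH f fS'.
have SI := socle_stage_ideal sS.
have [psi [psiS' psiE psiL]] := socle_layer_lift SI fS'.
have /choice[G GP] : forall i, exists G : {linear M -> (R^c)^o},
    forall m, socle_succ S (G m) /\ S (G m - psi m i).
  move=> i; apply: weakly_projective_lift => // [m|a m1 m2]; first exact: psiS'.
  by have := psiL a m1 m2 i; rewrite !ffunE.
pose g1f (m : M) : F := [ffun i => G i m].
have g1_lin : linear g1f by move=> a m1 m2; apply/ffunP => i; rewrite !ffunE linearP.
pose g1 : {linear M -> F} := HB.pack g1f (GRing.isLinear.Build _ _ _ _ _ g1_lin).
have sZ := submodule_vec_in n SI.
have sT := submodule_image (comb v) sZ.
have f'S m : (comb v @` vec_in S) (f m - comb v (g1 m)).
  have -> : f m - comb v (g1 m) = - (comb v (psi m) - f m) - comb v (g1 m - psi m).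
    by rewrite opprB (linearB (comb v)) opprB subrKA.
  apply: (submodB sT); first exact: (submodN sT).
  by exists (g1 m - psi m) => // i; rewrite !ffunE; apply: (GP i m).2.
have [g2 [g2S g2E]] := IH (f \- (comb v \o g1)) f'S.
have sZ' := submodule_vec_in n (socle_succ_ideal S).
exists (g1 \+ g2); split=> m.
- apply: (submodD sZ'); last exact: vec_inS (@socle_succ_sup R S) _ (g2S m).
  by move=> i; rewrite ffunE; apply: (GP i m).1.
- by rewrite [LHS](linearD (comb v)) g2E /= addrC subrK.
Qed.

Lemma socle_stage_liftable S : socle_stage S -> liftable S.
Proof.
elim=> [|S' sS' IH|Fam neF sF IH]; first exact: liftable0.
- exact: liftable_succ.
- exact: liftable_union.
Qed.

End Lifting.

Lemma projective_of_section (R : pzRingType) (M : lmodType R^c) (n : nat)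
  (v : 'I_n -> M) (g : {linear M -> {ffun 'I_n -> (R^c)^o}}) :
  (forall m, comb v (g m) = m) -> projective M.
Proof.
move=> gK N N' h h_surj f.
have /choice[y yE] : forall k, exists y, h y = f (v k) by move=> k; apply: h_surj.
have hy : h \o y = f \o v by apply/funext.
by exists (comb y \o g) => m; rewrite /comp linear_comb hy -linear_comb gK.
Qed.

Theorem corollary1p6 (R : pzRingType) (M : lmodType R^c) :
  right_semiartinian R -> ~ completely_reducible R ->
  fin_gen M -> weakly_projective M -> projective M.
Proof.
move=> [S sS Sall] _ [n [v vgen]] wproj.
have comb_onto m : (comb v @` vec_in S) (idfun m).
  have [c ->] := vgen m; exists [ffun i => c i] => [i|]; first exact: Sall.
  by rewrite combE; apply: eq_bigr => i _; rewrite ffunE.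
have [g [_ gK]] := socle_stage_liftable vgen wproj sS comb_onto.
exact: projective_of_section gK.
Qed.
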